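(* Let $f,g$ satisfy the standing assumptions below and suppose $\beta\ge\frac{2M_fQ_g}{\mu^3}$. Then for any $(x,y)\in\mathbb{R}^n\times\mathbb{R}^p$, $(x,y)$ is a $\mathcal{D}_h$-stationary point of (CDB) (i.e. $0\in\mathcal{D}_h(x,y)$) if and only if $0\in\hat{\mathcal{D}}_h(x,y)$.
   Context: Standing assumptions. (A1) Constants $M_f,\mu,L_g,Q_g>0$ exist such that: $f:\mathbb{R}^n\times\mathbb{R}^p\to\mathbb{R}$ is $M_f$-Lipschitz; $g$ is twice differentiable with $\nabla^2_{yy}g\succeq\mu I_p$; $\nabla g$ is $L_g$-Lipschitz; $\nabla^2_{yy}g,\nabla^2_{xy}g$ are $Q_g$-Lipschitz; $\nabla^2_{yy}g$ is continuously differentiable ($\nabla^2_{xy}g\in\mathbb{R}^{n\times p}$ has entries $\partial^2g/\partial x_i\partial y_j$). (A2) $f$ is a potential function of a conservative field $\mathcal{D}_f$ with compact convex values of norm at most $M_f$. Notation (all at $(x,y)$): $H=\nabla^2_{yy}g$; $\mathcal{A}(x,y):=y-H^{-1}\nabla_yg$; $\nabla^3_{xyy}g(x,y)[d]:=\lim_{t\to0}\frac1t(\nabla^2_{xy}g(x,y+td)-\nabla^2_{xy}g(x,y))$, $\nabla^3_{yyy}g(x,y)[d]:=\lim_{t\to0}\frac1t(\nabla^2_{yy}g(x,y+td)-\nabla^2_{yy}g(x,y))$; $J_{A,x}:=-\nabla^2_{xy}gH^{-1}+\nabla^3_{xyy}g[H^{-1}\nabla_yg]H^{-1}$, $J_{A,y}:=\nabla^3_{yyy}g[H^{-1}\nabla_yg]H^{-1}$;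 $\mathcal{D}_h(x,y):=\{(d_x+J_{A,x}d_y+\beta\nabla^2_{xy}g\nabla_yg,\ J_{A,y}d_y+\beta H\nabla_yg):(d_x,d_y)\in\mathcal{D}_f(x,\mathcal{A}(x,y))\}$; $\hat{\mathcal{D}}_h(x,y):=\{(d_x-\nabla^2_{xy}g(H^{-1}d_y-\beta\nabla_yg),\ \beta\nabla_yg):(d_x,d_y)\in\mathcal{D}_f(x,\mathcal{A}(x,y))\}$. *)

From HB Require Import structures.
From mathcomp Require Import all_boot all_order all_algebra.
From mathcomp Require Import all_classical all_reals all_analysis.
Set Implicit Arguments. Unset Strict Implicit. Unset Printing Implicit Defensive.
Import Order.TTheory GRing.Theory Num.Theory.
Import numFieldNormedType.Exports.
Local Open Scope classical_set_scope.
Local Open Scope ring_scope.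

Section Defs.
Variables (R : realType) (n p : nat).

Definition cinner (k : nat) (u v : 'cV[R]_k) : R := (u^T *m v) 0 0.
Definition cnorm (k : nat) (u : 'cV[R]_k) : R := Num.sqrt (\sum_i u i 0 ^+ 2).

Notation V := ('cV[R]_n * 'cV[R]_p)%type.

Definition pinner (u v : V) : R := cinner u.1 v.1 + cinner u.2 v.2.
Definition pnorm (u : V) : R :=
  Num.sqrt (\sum_i u.1 i 0 ^+ 2 + \sum_i u.2 i 0 ^+ 2).

Definition opnorm_le (k l : nat) (A : 'M[R]_(k, l)) (c : R) : Prop :=
  forall v : 'cV[R]_l, cnorm (A *m v) <= c * cnorm v.

Definition lipschitz_fun (L : R) (F : V -> R) : Prop :=
  forall z z' : V, `|F z - F z'| <= L * pnorm (z - z').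
Definition lipschitz_map (L : R) (F : V -> V) : Prop :=
  forall z z' : V, pnorm (F z - F z') <= L * pnorm (z - z').
Definition lipschitz_mx (k l : nat) (L : R) (F : V -> 'M[R]_(k, l)) : Prop :=
  forall z z' : V, opnorm_le (F z - F z') (L * pnorm (z - z')).

Definition convex_setV (C : set V) : Prop :=
  forall u v, C u -> C v -> forall t : R, 0 <= t <= 1 ->
    C (t *: u + (1 - t) *: v).

Definition abs_cont_curve (gamma : R -> V) : Prop :=
  forall eps : R, 0 < eps -> exists2 delta : R, 0 < delta &
    forall (N : nat) (a b : nat -> R),
      0 <= a 0%N -> (forall i, (i < N)%N -> a i <= b i) ->
      (forall i, (i.+1 < N)%N -> b i <= a i.+1) ->
      (0 < N)%N -> b N.-1 <= 1 ->
      \sum_(i < N) (b i - a i) < delta ->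
      \sum_(i < N) pnorm (gamma (b i) - gamma (a i)) < eps.

(* Bolte--Pauwels: D is a conservative field (closed graph, nonempty compact
   values, zero circulation along absolutely continuous loops) and f is a
   potential of D (path-integral formula along absolutely continuous curves). *)
Definition circulation (D : V -> set V) (gamma : R -> V) : R :=
  Rintegral lebesgue_measure `[0%R, 1%R]%classic
    (fun t => sup [set pinner (derive1 gamma t) v | v in D (gamma t)]).

Definition conservative_field (D : V -> set V) : Prop :=
  closed [set zv : V * V | D zv.1 zv.2] /\
  (forall z, D z !=set0 /\ compact (D z)) /\
  (forall gamma : R -> V, abs_cont_curve gamma -> gamma 0 = gamma 1 ->
     circulation D gamma = 0).

Definition potential_of (f : V -> R) (D : V -> set V) : Prop :=
  conservative_field D /\
  forall gamma : R -> V, abs_cont_curve gamma ->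
    f (gamma 1) = f (gamma 0) + circulation D gamma.

(* Third-order directional derivatives, defined as in the paper by limits *)
Definition d3xyy (Hxy : V -> 'M[R]_(n, p)) (z : V) (d : 'cV[R]_p)
  : 'M[R]_(n, p) :=
  lim ((fun t : R => t^-1 *: (Hxy (z.1, z.2 + t *: d) - Hxy z)) @ 0^').
Definition d3yyy (Hyy : V -> 'M[R]_p) (z : V) (d : 'cV[R]_p) : 'M[R]_p :=
  lim ((fun t : R => t^-1 *: (Hyy (z.1, z.2 + t *: d) - Hyy z)) @ 0^').

Definition Amap (grady : V -> 'cV[R]_p) (Hyy : V -> 'M[R]_p) (z : V)
  : 'cV[R]_p := z.2 - invmx (Hyy z) *m grady z.

Definition JAx (grady : V -> 'cV[R]_p) (Hxy : V -> 'M[R]_(n, p))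
  (Hyy : V -> 'M[R]_p) (z : V) : 'M[R]_(n, p) :=
  - Hxy z *m invmx (Hyy z)
  + d3xyy Hxy z (invmx (Hyy z) *m grady z) *m invmx (Hyy z).

Definition JAy (grady : V -> 'cV[R]_p) (Hyy : V -> 'M[R]_p) (z : V)
  : 'M[R]_p :=
  d3yyy Hyy z (invmx (Hyy z) *m grady z) *m invmx (Hyy z).

Definition Dh (Df : V -> set V) (grady : V -> 'cV[R]_p)
  (Hxy : V -> 'M[R]_(n, p)) (Hyy : V -> 'M[R]_p) (beta : R) (z : V)
  : set V :=
  [set (d.1 + JAx grady Hxy Hyy z *m d.2 + beta *: (Hxy z *m grady z),
        JAy grady Hyy z *m d.2 + beta *: (Hyy z *m grady z))
   | d in Df (z.1, Amap grady Hyy z)].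

Definition Dhat (Df : V -> set V) (grady : V -> 'cV[R]_p)
  (Hxy : V -> 'M[R]_(n, p)) (Hyy : V -> 'M[R]_p) (beta : R) (z : V)
  : set V :=
  [set (d.1 - Hxy z *m (invmx (Hyy z) *m d.2 - beta *: grady z),
        beta *: grady z)
   | d in Df (z.1, Amap grady Hyy z)].

End Defs.

From HB Require Import structures.
From mathcomp Require Import all_boot all_order all_algebra.
From mathcomp Require Import all_classical all_reals all_analysis.
From mathcomp Require Import ring lra.
Set Implicit Arguments. Unset Strict Implicit. Unset Printing Implicit Defensive.
Import Order.TTheory GRing.Theory Num.Theory.
Import numFieldNormedType.Exports.
Local Open Scope classical_set_scope.
Local Open Scope ring_scope.

(* Write [gy := grady (x, y)] and [H := Hyy (x, y)].  Membership of [0] in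
   [\hat D_h] says [beta gy = 0], and when [gy = 0] we get [A(x, y) = y],
   both third-order terms vanish, and [D_h] and [\hat D_h] are the same set.
   It remains to see that [0 \in D_h] forces [gy = 0]: testing the second
   component [J_{A,y} d_y + beta H gy = 0] against [gy], strong convexity and
   the bound [Qg |u|] on the operator norm of [d3yyy Hyy (x, y) u] give
   [beta mu |gy|^2 <= Qg |H^-1 gy| |H^-1 d_y| |gy| <= (Mf Qg / mu^2) |gy|^2],
   which the step-size condition only allows for [gy = 0]. *)

Section Euclidean.
Variables (R : realType) (k : nat).
Implicit Types (u v w : 'cV[R]_k).

Lemma cinnerE u v : cinner u v = \sum_i u i 0 * v i 0.
Proof. by rewrite /cinner mxE; apply: eq_bigr => i _; rewrite mxE. Qed.

Lemma cinnerC u v : cinner u v = cinner v u.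
Proof. by rewrite /cinner -[u in RHS]trmxK -trmx_mul [RHS]mxE. Qed.

Lemma cinnerDr u v w : cinner u (v + w) = cinner u v + cinner u w.
Proof. by rewrite /cinner mulmxDr mxE. Qed.

Lemma cinnerZr (a : R) u v : cinner u (a *: v) = a * cinner u v.
Proof. by rewrite /cinner -scalemxAr mxE. Qed.

Lemma cinner0r u : cinner u 0 = 0.
Proof. by rewrite /cinner mulmx0 mxE. Qed.

Lemma cinnerBr u v w : cinner u (v - w) = cinner u v - cinner u w.
Proof. by rewrite cinnerDr -scaleN1r cinnerZr mulN1r. Qed.

Lemma cinnerZl (a : R) u v : cinner (a *: u) v = a * cinner u v.
Proof. by rewrite cinnerC cinnerZr cinnerC. Qed.

Lemma cinnerBl u v w : cinner (u - v) w = cinner u w - cinner v w.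
Proof. by rewrite cinnerC cinnerBr !(cinnerC w). Qed.

Lemma cinner_ge0 v : 0 <= cinner v v.
Proof. by rewrite cinnerE; apply: sumr_ge0 => i _; rewrite -expr2 sqr_ge0. Qed.

Lemma cinner_eq0 v : cinner v v = 0 -> v = 0.
Proof.
rewrite cinnerE => /eqP; rewrite psumr_eq0 => [/allP vi0|i _]; last first.
  by rewrite -expr2 sqr_ge0.
apply/matrixP => i j; rewrite (ord1 j) mxE.
by have := vi0 i (mem_index_enum _); rewrite -expr2 sqrf_eq0 => /eqP.
Qed.

Lemma cnormE v : cnorm v = Num.sqrt (cinner v v).
Proof. by rewrite cinnerE; congr Num.sqrt; apply: eq_bigr => i _; rewrite expr2. Qed.

Lemma cnorm_ge0 v : 0 <= cnorm v.
Proof. exact: sqrtr_ge0. Qed.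

Lemma cnorm_sq v : cnorm v ^+ 2 = cinner v v.
Proof. by rewrite cnormE sqr_sqrtr ?cinner_ge0. Qed.

Lemma cnorm_eq0 v : cnorm v = 0 -> v = 0.
Proof. by move=> v0; apply: cinner_eq0; rewrite -cnorm_sq v0 expr0n. Qed.

Lemma cnormZ (a : R) v : cnorm (a *: v) = `|a| * cnorm v.
Proof.
rewrite !cnormE cinnerZr cinnerC cinnerZr mulrA -expr2.
by rewrite sqrtrM ?sqr_ge0 // sqrtr_sqr.
Qed.

(* Discriminant argument: [0 <= <B u - C v, B u - C v> = B (A B - C^2)]. *)
Lemma cauchy_schwarz u v : `|cinner u v| <= cnorm u * cnorm v.
Proof.
set A := cinner u u; set B := cinner v v; set C := cinner u v.
have A0 : 0 <= A := cinner_ge0 u; have B0 : 0 <= B := cinner_ge0 v.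
suff C2 : C ^+ 2 <= A * B.
  rewrite !cnormE -sqrtrM // -sqrtr_sqr ler_sqrt ?mulr_ge0 //.
have [v0|] := eqVneq v 0; first by rewrite /C v0 cinner0r expr0n mulr_ge0.
move=> /eqP v_neq0; have B_gt0 : 0 < B.
  by rewrite lt0r cinner_ge0 andbT; apply/eqP => /cinner_eq0.
have := cinner_ge0 (B *: u - C *: v).
rewrite !(cinnerBl, cinnerBr, cinnerZl, cinnerZr) [cinner v u]cinnerC.
rewrite -/A -/B -/C => h.
have : 0 <= B * (A * B - C ^+ 2) by nra.
by rewrite pmulr_rge0 // subr_ge0.
Qed.

End Euclidean.

Section StronglyPositive.
Variables (R : realType) (k : nat) (mu : R) (A : 'M[R]_k).
Hypothesis A_ge_mu : forall v, 0 <= cinner v ((A - mu%:M) *m v).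

Lemma cinner_mx_ge (v : 'cV[R]_k) : mu * cinner v v <= cinner v (A *m v).
Proof.
by have := A_ge_mu v; rewrite mulmxBl mul_scalar_mx cinnerBr cinnerZr subr_ge0.
Qed.

Hypothesis mu_gt0 : 0 < mu.

Lemma cnorm_mx_ge (v : 'cV[R]_k) : mu * cnorm v <= cnorm (A *m v).
Proof.
have [v0|v_neq0] := eqVneq (cnorm v) 0; first by rewrite v0 mulr0 cnorm_ge0.
have v_gt0 : 0 < cnorm v by rewrite lt0r v_neq0 cnorm_ge0.
rewrite -(ler_pM2l v_gt0) mulrCA -expr2 cnorm_sq.
apply: (le_trans (cinner_mx_ge v)).
exact: le_trans (ler_norm _) (cauchy_schwarz _ _).
Qed.

Lemma mx_strongly_pos_inj (v : 'cV[R]_k) : A *m v = 0 -> v = 0.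
Proof.
move=> Av0; apply: cnorm_eq0; apply/eqP; rewrite eq_le cnorm_ge0 andbT.
rewrite -(pmulr_rle0 _ mu_gt0) (le_trans (cnorm_mx_ge v)) //.
by rewrite Av0 cnormE cinner0r sqrtr0.
Qed.

Lemma unitmx_strongly_pos : A \in unitmx.
Proof.
rewrite -unitmx_tr -row_free_unit; apply: inj_row_free => v vA0.
apply: trmx_inj; rewrite trmx0; apply: mx_strongly_pos_inj.
by rewrite -[A]trmxK -trmx_mul vA0 trmx0.
Qed.

Lemma cnorm_invmx_le (v : 'cV[R]_k) : mu * cnorm (invmx A *m v) <= cnorm v.
Proof. by rewrite -{2}(mulKVmx unitmx_strongly_pos v) cnorm_mx_ge. Qed.

End StronglyPositive.

Section OperatorNorm.
Variables (R : realType) (k l : nat).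
Implicit Types (A : 'M[R]_(k, l)) (c : R).

Lemma cinner_opnorm_le A c (a : 'cV[R]_k) (w : 'cV[R]_l) :
  opnorm_le A c -> `|cinner a (A *m w)| <= cnorm a * (c * cnorm w).
Proof.
by move=> Ac; apply: le_trans (cauchy_schwarz _ _) _; rewrite ler_wpM2l ?cnorm_ge0.
Qed.

Lemma opnorm_leZ A c (a : R) : opnorm_le A c -> opnorm_le (a *: A) (`|a| * c).
Proof.
by move=> Ac v; rewrite -scalemxAl cnormZ -mulrA ler_wpM2l ?normr_ge0.
Qed.

Lemma cnorm_mulmx_continuous (v : 'cV[R]_l) :
  continuous (fun A : 'M[R]_(k, l) => cnorm (A *m v)).
Proof.
have entry_cont i : continuous (fun A : 'M[R]_(k, l) => (A *m v) i 0).
  under eq_fun do rewrite mxE.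
  apply: (continuous_big (op := +%R) (x0 := 0) (P := xpredT)) => [|j _].
    exact: add_continuous.
  move=> A; apply: continuousM; first exact: coord_continuous.
  exact: cst_continuous.
have -> : (fun A : 'M[R]_(k, l) => cnorm (A *m v)) =
    Num.sqrt \o (fun A => \sum_i (A *m v) i 0 ^+ 2) by [].
move=> A; apply: continuous_comp; last exact: sqrt_continuous.
apply: (continuous_big (op := +%R) (x0 := 0) (P := xpredT)) => [|i _] {A}.
  exact: add_continuous.
by move=> A; exact: (continuousM (entry_cont i A) (entry_cont i A)).
Qed.

Lemma closed_opnorm_le c : closed [set A : 'M[R]_(k, l) | opnorm_le A c].
Proof.
have -> : [set A : 'M[R]_(k, l) | opnorm_le A c] =
    \bigcap_(v in [set: 'cV[R]_l])
      ((fun A => cnorm (A *m v)) @^-1` [set r | r <= c * cnorm v]).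
  by apply/seteqP; split => [A Ac v _ | A Ac v]; [exact: Ac | exact: Ac].
apply: closed_bigI => v _; apply: preimage_closed; last exact: closed_le.
by move=> A _; apply: cnorm_mulmx_continuous.
Qed.

End OperatorNorm.

Section DirectionalDerivative.
Variables (R : realType) (n p : nat).
Local Notation V := ('cV[R]_n * 'cV[R]_p)%type.

Lemma pnorm_0l (u : 'cV[R]_p) : pnorm ((0 : 'cV[R]_n), u) = cnorm u.
Proof. by rewrite /pnorm /cnorm /= big1 ?add0r // => i _; rewrite mxE expr0n. Qed.

Lemma cnorm_le_pnorm2 (d : V) : cnorm d.2 <= pnorm d.
Proof.
by apply: ler_wsqrtr; rewrite lerDr; apply: sumr_ge0 => i _; rewrite sqr_ge0.
Qed.

Lemma opnorm_le_diff_quotient k (F : V -> 'M[R]_(k, p)) Q (z : V) u (t : R) :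
  lipschitz_mx Q F -> t != 0 ->
  opnorm_le (t^-1 *: (F (z.1, z.2 + t *: u) - F z)) (Q * cnorm u).
Proof.
move=> FQ t0; have := opnorm_leZ t^-1 (FQ (z.1, z.2 + t *: u) z).
have -> : (z.1, z.2 + t *: u) - z = ((0 : 'cV[R]_n), t *: u).
  by case: z => z1 z2; congr (_, _); rewrite /= ?subrr // addrC addKr.
by rewrite pnorm_0l cnormZ normfV mulrCA mulKf ?normr_eq0.
Qed.

Lemma d3yyy_opnorm_le (Hyy : V -> 'M[R]_p) Q (z : V) u :
  lipschitz_mx Q Hyy -> differentiable Hyy z ->
  opnorm_le (d3yyy Hyy z u) (Q * cnorm u).
Proof.
move=> HQ /(@diff_derivable _ _ _ Hyy z ((0 : 'cV[R]_n), u)).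
rewrite /derivable /d3yyy.
set F := fun t : R => t^-1 *: (Hyy (z.1, z.2 + t *: u) - Hyy z).
have -> : (fun h : R =>
    h^-1 *: ((Hyy \o shift z) (h *: ((0 : 'cV[R]_n), u)) - Hyy z)) = F.
  apply/funext => t; rewrite /F /= /shift; congr (_ *: (Hyy _ - _)).
  by case: z {F} => z1 z2; congr (_, _); rewrite /= ?scaler0 ?add0r // addrC.
move=> F_cvg.
apply: (closed_cvg _ (@closed_opnorm_le R p p (Q * cnorm u)) _ _ F_cvg).
near=> t; apply: opnorm_le_diff_quotient => //.
by near: t; exact: nbhs_dnbhs_neq.
Unshelve. all: by end_near.
Qed.

End DirectionalDerivative.

Section Stationarity.
Variables (R : realType) (n p : nat).
Local Notation V := ('cV[R]_n * 'cV[R]_p)%type.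

Lemma diff_quotient_dir0 k l (F : V -> 'M[R]_(k, l)) (z : V) :
  (fun t : R => t^-1 *: (F (z.1, z.2 + t *: 0) - F z)) = fun=> 0.
Proof.
by apply/funext => t; rewrite scaler0 addr0 -surjective_pairing subrr scaler0.
Qed.

Lemma d3xyy0 (Hxy : V -> 'M[R]_(n, p)) (z : V) : d3xyy Hxy z 0 = 0.
Proof. by rewrite /d3xyy diff_quotient_dir0 lim_cst. Qed.

Lemma d3yyy0 (Hyy : V -> 'M[R]_p) (z : V) : d3yyy Hyy z 0 = 0.
Proof. by rewrite /d3yyy diff_quotient_dir0 lim_cst. Qed.

Lemma Dh_eq_Dhat Df grady Hxy Hyy (beta : R) (z : V) : grady z = 0 ->
  Dh Df grady Hxy Hyy beta z = Dhat Df grady Hxy Hyy beta z.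
Proof.
move=> g0; rewrite /Dh /Dhat /JAx /JAy g0 mulmx0 d3xyy0 d3yyy0.
apply: eq_imagel => d _.
by rewrite !(mul0mx, mulmx0, scaler0, addr0, subr0) -mulmxA mulNmx.
Qed.

End Stationarity.

Lemma stationary_grad_eq0 (R : realType) (p : nat) (H D : 'M[R]_p)
    (g d : 'cV[R]_p) (mu M Q beta : R) :
  0 < mu -> 0 < M -> 0 < Q ->
  (forall v, 0 <= cinner v ((H - mu%:M) *m v)) ->
  opnorm_le D (Q * cnorm (invmx H *m g)) -> cnorm d <= M ->
  2 * M * Q / mu ^+ 3 <= beta ->
  D *m (invmx H *m d) + beta *: (H *m g) = 0 -> g = 0.
Proof.
move=> mu_gt0 M_gt0 Q_gt0 H_ge DQ dM beta_ge stat.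
set u := invmx H *m g; set w := invmx H *m d; set c := cnorm g.
have beta_mu3 : 2 * M * Q <= beta * mu ^+ 3 by rewrite -ler_pdivrMr ?exprn_gt0.
have beta_ge0 : 0 <= beta.
  by rewrite -(pmulr_lge0 _ (exprn_gt0 3 mu_gt0)); apply: le_trans beta_mu3; nra.
have u_le : mu * cnorm u <= c := cnorm_invmx_le H_ge mu_gt0 g.
have w_le : mu * cnorm w <= M := le_trans (cnorm_invmx_le H_ge mu_gt0 d) dM.
have test_g : beta * cinner g (H *m g) = - cinner g (D *m w).
  by apply/eqP; rewrite -addr_eq0 addrC -cinnerZr -cinnerDr stat cinner0r.
have key : beta * (mu * c ^+ 2) <= c * (Q * cnorm u * cnorm w).
  rewrite cnorm_sq; apply: le_trans (ler_wpM2l beta_ge0 (cinner_mx_ge H_ge g)) _.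
  rewrite test_g; apply: le_trans (ler_norm _) _.
  by rewrite normrN; exact: cinner_opnorm_le.
have c_ge0 : 0 <= c := cnorm_ge0 g.
have u_ge0 := cnorm_ge0 u; have w_ge0 := cnorm_ge0 w.
apply: (@cnorm_eq0 R p g); rewrite -/c.
have bound : beta * mu ^+ 3 * c ^+ 2 <= M * Q * c ^+ 2.
  have uw : mu * cnorm u * (mu * cnorm w) <= c * M.
    by apply: ler_pM => //; rewrite mulr_ge0 // ltW.
  have -> : beta * mu ^+ 3 * c ^+ 2 = mu ^+ 2 * (beta * (mu * c ^+ 2)) by ring.
  apply: le_trans (ler_wpM2l (sqr_ge0 mu) key) _.
  have -> : mu ^+ 2 * (c * (Q * cnorm u * cnorm w)) =
    c * Q * (mu * cnorm u * (mu * cnorm w)) by ring.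
  have -> : M * Q * c ^+ 2 = c * Q * (c * M) by ring.
  by rewrite ler_wpM2l // mulr_ge0 // ltW.
have MQc2 : M * Q * c ^+ 2 <= 0 by nra.
apply/eqP; rewrite -sqrf_eq0 eq_le sqr_ge0 andbT.
by rewrite -(pmulr_rle0 _ (mulr_gt0 M_gt0 Q_gt0)).
Qed.

Theorem proposition4p3 (R : realType) (n p : nat)
  (f g : 'cV[R]_n * 'cV[R]_p -> R)
  (Df : 'cV[R]_n * 'cV[R]_p -> set ('cV[R]_n * 'cV[R]_p))
  (gradx : 'cV[R]_n * 'cV[R]_p -> 'cV[R]_n)
  (grady : 'cV[R]_n * 'cV[R]_p -> 'cV[R]_p)
  (Hxy : 'cV[R]_n * 'cV[R]_p -> 'M[R]_(n, p))
  (Hyy : 'cV[R]_n * 'cV[R]_p -> 'M[R]_p)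
  (Mf mu Lg Qg beta : R) :
  (* (A1) *)
  0 < Mf -> 0 < mu -> 0 < Lg -> 0 < Qg ->
  lipschitz_fun Mf f ->
  (* g differentiable with gradient (gradx, grady) *)
  (forall z, differentiable g z /\
     forall h, 'd g z h = cinner (gradx z) h.1 + cinner (grady z) h.2) ->
  (* g twice differentiable; Hxy, Hyy are the blocks of its Hessian *)
  (forall z, differentiable gradx z /\ differentiable grady z /\
     forall h, 'd grady z h = (Hxy z)^T *m h.1 + Hyy z *m h.2) ->
  (forall z (v : 'cV[R]_p), 0 <= cinner v ((Hyy z - mu%:M) *m v)) ->
  lipschitz_map Lg (fun z => (gradx z, grady z)) ->
  lipschitz_mx Qg Hyy ->
  lipschitz_mx Qg Hxy ->
  (forall z, differentiable Hyy z) ->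
  (forall h, continuous (fun z => 'd Hyy z h)) ->
  (* (A2) *)
  potential_of f Df ->
  (forall z, convex_setV (Df z)) ->
  (forall z v, Df z v -> pnorm v <= Mf) ->
  (* step-size condition *)
  2 * Mf * Qg / mu ^+ 3 <= beta ->
  forall (x : 'cV[R]_n) (y : 'cV[R]_p),
    Dh Df grady Hxy Hyy beta (x, y) 0 <-> Dhat Df grady Hxy Hyy beta (x, y) 0.
Proof.
move=> Mf_gt0 mu_gt0 _ Qg_gt0 _ _ _ Hyy_ge _ Hyy_lip _ Hyy_diff _ _ _ Df_le.
move=> beta_ge x y.
set z := (x, y).
have beta_gt0 : 0 < beta.
  apply: lt_le_trans beta_ge.
  by rewrite divr_gt0 ?exprn_gt0 // !mulr_gt0.
split=> [[d Df_d stat] | [d Df_d stat]].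
- have g0 : grady z = 0.
    apply: (stationary_grad_eq0 mu_gt0 Mf_gt0 Qg_gt0 (Hyy_ge z)
      (d3yyy_opnorm_le _ Hyy_lip (Hyy_diff z))
      (le_trans (cnorm_le_pnorm2 d) (Df_le _ _ Df_d)) beta_ge).
    by have := congr1 snd stat; rewrite /= /JAy -mulmxA.
  by rewrite -Dh_eq_Dhat //; exists d.
- have g0 : grady z = 0.
    have /eqP := congr1 snd stat; rewrite /= scaler_eq0 gt_eqF //=.
    by move/eqP.
  by rewrite Dh_eq_Dhat //; exists d.
Qed.
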